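(* Let $X_t$, $t=0,1,\dots$, be a Markov chain on the finite state space $\Sigma=\{1,\dots,N\}$ with transition probability matrix $P=[p_{ij}]$ acting on row vectors by $x_{t+1}=x_tP$. Assume that $P$ is diagonalizable and has full rank. Consider a set of linearly independent right eigenvectors $u^{\alpha}$ of $P$, $Pu^{\alpha}=\lambda^{\alpha}u^{\alpha}$, indexed by $\alpha\in I$ where $I\subseteq\Sigma$. Define an equivalence relation on $\Sigma$ by $i\sim j$ if and only if $u^{\alpha}_i=u^{\alpha}_j$ for all $\alpha\in I$, and let $\widetilde{\Sigma}$ be the resulting partition of $\Sigma$ into equivalence classes. Then: (1) If $|\widetilde{\Sigma}|=|I|$, then $\widetilde{\Sigma}$ is a (strong) lumping of the Markov chain. (2) Conversely, if $\widetilde{\Sigma}$ is a partition of $\Sigma$ that is a (strong) lumping of the Markov chain, then there exist $|\widetilde{\Sigma}|$ linearly independent right eigenvectors of $P$ that are invariant under permutations of states within the lumps (i.e., each such eigenvector $y$ satisfies $y_i=y_j$ whenever $i,j$ lie in the same block of $\widetilde{\Sigma}$).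
   Context: A lumping (partition) of $\Sigma$ is $\widetilde{\Sigma}=\{L_1,\dots,L_M\}$ with nonempty, pairwise disjoint blocks $L_k$ whose union is $\Sigma$; it is encoded by the $N\times M$ matrix $\Pi=[\pi_{ik}]$ with $\pi_{ik}=1$ if $i\in L_k$ and $0$ otherwise. The chain is called strongly lumpable with respect to $\widetilde{\Sigma}$ (and $\widetilde{\Sigma}$ is then called a lumping of the chain) if the quotient process $\tilde{x}_t=x_t\Pi$ is a Markov process; equivalently, for all blocks $L_k,L_l$ the quantity $\sum_{j\in L_l}p_{ij}$ is the same for every $i\in L_k$. Right eigenvectors are $N\times 1$ column vectors $u$ with $Pu=\lambda u$. *)

From HB Require Import structures.
From mathcomp Require Import all_boot all_order all_algebra.
Set Implicit Arguments. Unset Strict Implicit. Unset Printing Implicit Defensive.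
Import Order.TTheory GRing.Theory Num.Theory.
Local Open Scope ring_scope.

(* Scalars: an arbitrary numeric algebraically closed field C (e.g. the
   complex numbers); a stochastic matrix has real entries, which is
   expressed by 0 <= p_ij (nonnegativity forces realness). *)

Definition stochastic (C : numClosedFieldType) (N : nat) (P : 'M[C]_N) : Prop :=
  (forall i j, 0 <= P i j) /\ (forall i, \sum_(j < N) P i j = 1).

Definition right_eigenvector (C : numClosedFieldType) (N : nat)
  (P : 'M[C]_N) (lam : C) (u : 'cV[C]_N) : Prop :=
  u != 0 /\ P *m u = lam *: u.

Definition lin_indep (C : numClosedFieldType) (N : nat) (T : finType)
  (I : {pred T}) (u : T -> 'cV[C]_N) : Prop :=
  forall c : T -> C, \sum_(a in I) c a *: u a = 0 -> forall a, a \in I -> c a = 0.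

Definition strongly_lumpable (C : numClosedFieldType) (N : nat)
  (P : 'M[C]_N) (L : {set {set 'I_N}}) : Prop :=
  partition L [set: 'I_N] /\
  forall B B', B \in L -> B' \in L -> forall i k, i \in B -> k \in B ->
    \sum_(j in B') P i j = \sum_(j in B') P k j.

Definition eig_equiv (C : numClosedFieldType) (N : nat) (I : {set 'I_N})
  (u : 'I_N -> 'cV[C]_N) : rel 'I_N :=
  fun i j => [forall a in I, u a i 0 == u a j 0].

Definition eig_partition (C : numClosedFieldType) (N : nat) (I : {set 'I_N})
  (u : 'I_N -> 'cV[C]_N) : {set {set 'I_N}} :=
  equivalence_partition (eig_equiv I u) [set: 'I_N].

From HB Require Import structures.
From mathcomp Require Import all_boot all_order all_algebra.
Set Implicit Arguments. Unset Strict Implicit. Unset Printing Implicit Defensive.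
Import Order.TTheory GRing.Theory Num.Theory.
Local Open Scope ring_scope.

(* Let W be the space of vectors that are constant on the blocks of a
   partition L; it has dimension |L|, with the block indicators as a basis.
   L is a lumping exactly when P W <= W, since P applied to the indicator of
   a block B' has i-th entry sum_(j in B') p_ij.
   (1) Each u^a lies in W; if there are |L| independent ones they span W,
   and W, spanned by eigenvectors, is P-invariant.
   (2) If W is P-invariant, the restriction of the diagonalizable map P to W
   is diagonalizable, which yields |L| independent eigenvectors in W.
   Since row spaces are the native notion of subspace, W is handled as the
   row space of the indicator matrix and P through its transpose. *)

Section LinearAlgebra.
Variable F : fieldType.

Lemma row_free_kerP m n (A : 'M[F]_(m, n)) :
  reflect (forall c : 'rV_m, c *m A = 0 -> c = 0) (row_free A).
Proof.
apply: (iffP idP) => [fA c /eqP | kerA0]; first by rewrite mulmx_free_eq0 // => /eqP.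
rewrite -kermx_eq0 -submx0; apply/row_subP => r.
by have /sub_kermxP/kerA0 -> := row_sub r (kermx A); rewrite sub0mx.
Qed.

Lemma diagonalizable_tr n (A : 'M[F]_n) : diagonalizable A -> diagonalizable A^T.
Proof.
move=> [Q Qu] /(similar_diagLR Qu) [D ->].
have QTu : Q^T \in unitmx by rewrite unitmx_tr.
exists (invmx Q^T); first by rewrite unitmx_inv.
apply/similar_diagPex; exists D.
apply: similarW; first by rewrite row_free_unit unitmx_inv.
rewrite conjumx ?unitmx_inv // invmxK !trmx_mul trmx_inv tr_diag_mx.
by rewrite mulKmx.
Qed.

Lemma stable_diagonalizable_eigenbasis m n (A : 'M[F]_n) (V : 'M_(m, n)) :
  diagonalizable A -> row_free V -> stablemx V A ->
  exists (Y : 'M_(m, n)) (d : 'rV_m),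
    [/\ row_free Y, (Y <= V)%MS & Y *m A = diag_mx d *m Y].
Proof.
case: m V => [|m] V dA fV sV.
  by exists 0, 0; rewrite /row_free !flatmx0 mxrank0 sub0mx.
case: n A V dA fV sV => [|n] A V dA fV sV.
  by move: (rank_leq_col V); rewrite (eqP fV).
have /diagonalizableP [rs urs mA] := dA.
(* The minimal polynomial of the restriction of A to V divides that of A. *)
have : diagonalizable (conjmx V A).
  apply/diagonalizableP; exists rs => //.
  exact: dvdp_trans (mxminpoly_conj fV sV) mA.
move=> [Q Qu] /similar_diagPex [d /(similarPp (stablemx_unit _ Qu)) QAd].
exists (Q *m V), d; split; first by rewrite /row_free mxrankMfree // mxrank_unit.
  exact: submxMl.
by rewrite -mulmxA -[V *m A](mulmxKpV sV) mulmxA QAd mulmxA.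
Qed.

End LinearAlgebra.

Section LumpMatrix.
Variables (F : fieldType) (N : nat) (L : {set {set 'I_N}}).
Hypothesis partL : partition L [set: 'I_N].

Definition constant_on_blocks (f : 'I_N -> F) : Prop :=
  forall B, B \in L -> forall i j, i \in B -> j \in B -> f i = f j.

Definition lump_mx : 'M[F]_(#|L|, N) :=
  \matrix_(k, j) (j \in enum_val (k : 'I_#|L|))%:R.

Lemma partition_block_eq B B' j :
  B \in L -> B' \in L -> j \in B -> j \in B' -> B = B'.
Proof.
have /and3P [_ tL _] := partL => BL B'L jB jB'.
by rewrite -(def_pblock tL BL jB) (def_pblock tL B'L jB').
Qed.

Lemma mem_lump_block (k : 'I_#|L|) B i j : B \in L -> i \in B -> j \in B ->
  (i \in enum_val k) = (j \in enum_val k).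
Proof.
move=> BL iB jB; apply/idP/idP => h.
  by rewrite -(partition_block_eq BL (enum_valP k) iB h).
by rewrite -(partition_block_eq BL (enum_valP k) jB h).
Qed.

Lemma row_free_lump_mx : row_free lump_mx.
Proof.
have /and3P [_ _ L0] := partL.
apply/row_free_kerP => c cW.
apply/rowP => k; rewrite mxE.
have /set0Pn [j jk] : enum_val k != set0.
  by apply: contraNneq L0 => <-; apply: enum_valP.
have := congr1 (fun v : 'rV[F]_N => v 0 j) cW; rewrite !mxE => <-.
rewrite (bigD1 k) //= mxE jk mulr1 big1 ?addr0 // => k' k'k; rewrite mxE.
case jk': (j \in enum_val k'); last by rewrite mulr0.
have /enum_val_inj k'E := partition_block_eq (enum_valP k') (enum_valP k) jk' jk.
by rewrite k'E eqxx in k'k.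
Qed.

Lemma sub_lump_mxP (v : 'rV[F]_N) :
  reflect (constant_on_blocks (v 0)) (v <= lump_mx)%MS.
Proof.
apply: (iffP idP) => [/submxP [r ->] B BL i j iB jB | cv].
  by rewrite !mxE; apply: eq_bigr => k _; rewrite !mxE (mem_lump_block k BL iB jB).
have /and3P [/eqP cL _ _] := partL.
pose rep (k : 'I_#|L|) := if [pick x in enum_val k] is Some x then v 0 x else 0.
apply/submxP; exists (\row_k rep k); apply/rowP => j.
have jL : pblock L j \in L by rewrite pblock_mem // cL inE.
pose k0 := enum_rank_in jL (pblock L j).
have jk0 : j \in enum_val k0 by rewrite enum_rankK_in // mem_pblock cL inE.
rewrite !mxE (bigD1 k0) //= !mxE jk0 mulr1 big1 ?addr0.
  rewrite /rep; case: pickP => [x xk0 | /(_ j)]; last by rewrite jk0.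
  exact: cv _ (enum_valP k0) j x jk0 xk0.
move=> k kk0; rewrite !mxE; case jk: (j \in enum_val k); last by rewrite mulr0.
have /enum_val_inj kE := partition_block_eq (enum_valP k) (enum_valP k0) jk jk0.
by rewrite kE eqxx in kk0.
Qed.

Lemma lump_mx_mul_trE (A : 'M[F]_N) (k : 'I_#|L|) i :
  row k (lump_mx *m A^T) 0 i = \sum_(j in enum_val k) A i j.
Proof.
rewrite !mxE [RHS]big_mkcond; apply: eq_bigr => j _; rewrite !mxE.
by case: (j \in enum_val k); rewrite ?mul1r ?mul0r.
Qed.

Lemma stable_lump_mxP (A : 'M[F]_N) :
  reflect (forall B', B' \in L -> constant_on_blocks (fun i => \sum_(j in B') A i j))
          (stablemx lump_mx A^T).
Proof.
apply: (iffP row_subP) => [sW B' B'L | lumpA k].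
  have /sub_lump_mxP cW := sW (enum_rank_in B'L B').
  move=> B BL i j iB jB; have := cW B BL i j iB jB.
  by rewrite !lump_mx_mul_trE enum_rankK_in.
apply/sub_lump_mxP => B BL i j iB jB; rewrite !lump_mx_mul_trE.
exact: lumpA (enum_valP k) B BL i j iB jB.
Qed.

End LumpMatrix.

Section Eigenvectors.
Variables (C : numClosedFieldType) (N : nat) (P : 'M[C]_N).

Lemma eig_equiv_equivalence (I : {set 'I_N}) (u : 'I_N -> 'cV[C]_N) :
  equivalence_rel (eig_equiv I u).
Proof.
move=> x y z; split; first by apply/forall_inP.
move=> /forall_inP exy; apply/forall_inP/forall_inP => e a aI.
  by rewrite -(eqP (exy a aI)); exact: e.
by rewrite (eqP (exy a aI)); exact: e.
Qed.

Lemma eig_partitionP (I : {set 'I_N}) (u : 'I_N -> 'cV[C]_N) :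
  partition (eig_partition I u) [set: 'I_N].
Proof.
exact: equivalence_partitionP (fun x y z _ _ _ => eig_equiv_equivalence I u x y z).
Qed.

Lemma eig_partition_constant (I : {set 'I_N}) (u : 'I_N -> 'cV[C]_N) a :
  a \in I -> constant_on_blocks (eig_partition I u) (fun i => u a i 0).
Proof.
move=> aI B BL i j iB jB; have /and3P [_ tL _] := eig_partitionP I u.
have : j \in pblock (eig_partition I u) i by rewrite (def_pblock tL BL iB).
rewrite pblock_equivalence_partition ?inE //; last first.
  by move=> x y z _ _ _; apply: eig_equiv_equivalence.
by move/forall_inP/(_ a aI)/eqP.
Qed.

Definition family_mx (I : {set 'I_N}) (u : 'I_N -> 'cV[C]_N) : 'M[C]_(#|I|, N) :=
  \matrix_(k, j) u (enum_val (k : 'I_#|I|)) j 0.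

Lemma row_family_mx (I : {set 'I_N}) (u : 'I_N -> 'cV[C]_N) (k : 'I_#|I|) :
  row k (family_mx I u) = (u (enum_val k))^T.
Proof. by apply/rowP => j; rewrite !mxE. Qed.

Lemma row_free_family_mx (I : {set 'I_N}) (u : 'I_N -> 'cV[C]_N) :
  lin_indep (mem I) u -> row_free (family_mx I u).
Proof.
move=> liu; apply/row_free_kerP => c cU.
pose coef a := \sum_(k | enum_val k == a) c 0 k.
have coefE k : coef (enum_val k) = c 0 k.
  by rewrite /coef (big_pred1 k) // => k'; rewrite /= (inj_eq enum_val_inj).
have : \sum_(a in I) coef a *: u a = 0.
  rewrite (big_enum_val (fun a => coef a *: u a)) /=.
  apply: trmx_inj; rewrite trmx0 -cU mulmx_sum_row linear_sum /=.
  by apply: eq_bigr => k _; rewrite linearZ /= coefE row_family_mx.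
move/liu => coef0; apply/rowP => k; rewrite mxE -coefE coef0 //.
exact: enum_valP.
Qed.

Lemma stable_family_mx (I : {set 'I_N}) (u : 'I_N -> 'cV[C]_N) (lam : 'I_N -> C) :
  (forall a, a \in I -> right_eigenvector P (lam a) (u a)) ->
  stablemx (family_mx I u) P^T.
Proof.
move=> eig; apply/row_subP => k; rewrite row_mul row_family_mx -trmx_mul.
have [_ ->] := eig _ (enum_valP k).
by rewrite linearZ /= -row_family_mx scalemx_sub ?row_sub.
Qed.

Lemma family_mx_sub_lump_mx (I : {set 'I_N}) (u : 'I_N -> 'cV[C]_N) :
  (family_mx I u <= lump_mx C (eig_partition I u))%MS.
Proof.
apply/row_subP => k; apply/sub_lump_mxP; first exact: eig_partitionP.
move=> B BL i j iB jB; rewrite !row_family_mx !mxE.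
exact: eig_partition_constant (enum_valP k) B BL i j iB jB.
Qed.

Lemma eigenvectors_lumping (I : {set 'I_N}) (u : 'I_N -> 'cV[C]_N) (lam : 'I_N -> C) :
  (forall a, a \in I -> right_eigenvector P (lam a) (u a)) ->
  lin_indep (mem I) u -> #|eig_partition I u| = #|I| ->
  strongly_lumpable P (eig_partition I u).
Proof.
move=> eig liu cardL; set L := eig_partition I u.
have partL : partition L [set: 'I_N] by exact: eig_partitionP.
have UW := family_mx_sub_lump_mx I u.
have eqUW : (family_mx I u :=: lump_mx C L)%MS.
  apply/eqmxP; rewrite UW /=; have [_ <-] := mxrank_leqif_sup UW.
  by rewrite (eqP (row_free_family_mx liu)) (eqP (row_free_lump_mx C partL)) cardL.
have /(stable_lump_mxP partL) lumpP : stablemx (lump_mx C L) P^T.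
  by rewrite -(eqmx_stable _ eqUW); exact: stable_family_mx eig.
by split=> // B B' BL B'L i k iB kB; exact: lumpP B' B'L B BL i k iB kB.
Qed.

Lemma lumping_eigenvectors (L : {set {set 'I_N}}) :
  diagonalizable P -> strongly_lumpable P L ->
  exists (y : 'I_#|L| -> 'cV[C]_N) (lam : 'I_#|L| -> C),
    [/\ forall a, right_eigenvector P (lam a) (y a),
        lin_indep (mem [set: 'I_#|L|]) y &
        forall a, constant_on_blocks L (fun i => y a i 0)].
Proof.
move=> dP [partL lumpL].
have sW : stablemx (lump_mx C L) P^T.
  by apply/(stable_lump_mxP partL) => B' B'L B BL i k iB kB; exact: (lumpL B B').
have [Y [d [fY YW YP]]] := stable_diagonalizable_eigenbasis
  (diagonalizable_tr dP) (row_free_lump_mx C partL) sW.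
have /row_free_kerP kerY := fY.
exists (fun a => (row a Y)^T), (fun a => d 0 a); split.
- move=> a; split.
    apply/eqP => Ya0; have : row a Y = 0 by rewrite -[row a Y]trmxK Ya0 trmx0.
    rewrite rowE => /kerY/matrixP/(_ 0 a); rewrite !mxE !eqxx /= => /eqP.
    by rewrite oner_eq0.
  apply: trmx_inj; rewrite trmx_mul !trmxK linearZ /= trmxK -row_mul YP row_mul.
  by rewrite row_diag_mx -scalemxAl -rowE.
- move=> c c0; have : (\row_a c a) *m Y = 0.
    apply: trmx_inj; rewrite mulmx_sum_row trmx0 linear_sum /= -[RHS]c0.
    apply: eq_big => [a|a _]; first by rewrite !inE.
    by rewrite linearZ /= mxE.
  by move/kerY/rowP => rc0 a _; have := rc0 a; rewrite !mxE.
- move=> a; have /(sub_lump_mxP partL) cY := submx_trans (row_sub a Y) YW.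
  by move=> B BL i j iB jB; have := cY B BL i j iB jB; rewrite !mxE.
Qed.

End Eigenvectors.

Theorem theorem2 (C : numClosedFieldType) (N : nat) (P : 'M[C]_N) :
  stochastic P -> diagonalizable P -> P \in unitmx ->
  (forall (I : {set 'I_N}) (u : 'I_N -> 'cV[C]_N) (lam : 'I_N -> C),
     (forall a, a \in I -> right_eigenvector P (lam a) (u a)) ->
     lin_indep (mem I) u ->
     #|eig_partition I u| = #|I| ->
     strongly_lumpable P (eig_partition I u)) /\
  (forall L : {set {set 'I_N}},
     strongly_lumpable P L ->
     exists (y : 'I_#|L| -> 'cV[C]_N) (lam : 'I_#|L| -> C),
       (forall a, right_eigenvector P (lam a) (y a)) /\
       lin_indep (mem [set: 'I_#|L|]) y /\
       (forall a B, B \in L -> forall i j, i \in B -> j \in B ->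
          y a i 0 = y a j 0)).
Proof.
move=> _ dP _; split; first exact: eigenvectors_lumping.
move=> L /(lumping_eigenvectors dP) [y [lam [eig liy cy]]].
by exists y, lam.
Qed.
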